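(* In the construction below, $\hat{\mathcal D}$ is $1$-expanding with respect to $(X,d)$: for any two directed paths $\gamma_1,\gamma_2$ in $\mathcal D$ from the root to vertices $(x_1,K),(x_2,K)$ respectively, $\mathrm{dist}_{\hat{\mathcal D}}(\gamma_1,\gamma_2)\ge d(x_1,x_2)$.
   Context: Construction. Let $(X,d)$ be a metric space with $n=|X|\ge2$ and $\mathrm{diam}(X)=1$. For $S\subseteq X$, $r\ge0$: $B_X(S,r):=\{x\in X:\exists s\in S,\ d(x,s)\le r\}$ and $B_X(x,r):=B_X(\{x\},r)$. Let $\varepsilon_0:=\min\{d(x,y):x\ne y\}$, $\tau:=12$, $K:=1+\lceil\log_\tau(1/\varepsilon_0)\rceil$. For $\eta>0$ the greedy $\eta$-net is built as: $N_0=\emptyset$; for $j\ge1$, $S_j:=X\setminus B_X(N_{j-1},\eta)$; if $S_j=\emptyset$ output $N_{j-1}$; else pick $x_j\in S_j$ maximizing $|B_X(x,\eta/3)|$ and set $N_j=N_{j-1}\cup\{x_j\}$. For $k=0,\dots,K$ let $U_k$ be the greedy $\tau^{-k}$-net. For $k<K$, $A_k$ is the set of pairs $(u,u')\in U_k\times U_{k+1}$ with (i) $d(u,u')\le4\tau^{-k}$ and (ii) $|B_X(u,\tau^{-k}/3)|\ge\max\{|B_X(w,\tau^{-k}/3)|:w\in B_X(u',6\tau^{-(k+1)})\}$. The directed graph $\mathcal D$ has vertex set $\{(u,k):u\in U_k,\ 0\le k\le K\}$, arcs $((u,k),(u',k+1))$ for $(u,u')\in A_k$, root $(u,0)$ with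 $U_0=\{u\}$, and the vertices $(x,K)$ are identified with $x\in X$. Arc weights: $\omega_{(u,k)(u',k+1)}:=10\tau^{-k}$. For two root-to-level-$K$ paths $\gamma_1\ne\gamma_2$, let $a$ be the first vertex at which they diverge, with arcs $av_1\in\gamma_1$, $av_2\in\gamma_2$, $v_1\ne v_2$; $\mathrm{dist}_{\hat{\mathcal D}}(\gamma_1,\gamma_2):=\max(\omega_{av_1},\omega_{av_2})$, and $\mathrm{dist}_{\hat{\mathcal D}}(\gamma,\gamma):=0$. *)

From HB Require Import structures.
From mathcomp Require Import all_boot all_order all_algebra.
From mathcomp Require Import reals exp.
Set Implicit Arguments. Unset Strict Implicit. Unset Printing Implicit Defensive.
Import Order.TTheory GRing.Theory Num.Theory.
Local Open Scope ring_scope.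

Section Construction.
Variables (R : realType) (T : finType) (d : T -> T -> R).

Definition is_metric : Prop :=
  [/\ forall x y, d x y = 0 <-> x = y,
      forall x y, d x y = d y x &
      forall x y z, d x z <= d x y + d y z].

Definition diam : R := \big[Order.max/0]_(p : T * T) d p.1 p.2.

(* eps0 = min_{x <> y} d(x,y)  (identity 1 is harmless since diam = 1, n >= 2) *)
Definition eps0 : R := \big[Order.min/1]_(p : T * T | p.1 != p.2) d p.1 p.2.

Definition tau : R := 12%:R.

Definition Kc : nat := (`|Num.ceil (ln (eps0^-1) / ln tau)|%N).+1.

Definition ballS (S : {set T}) (r : R) : {set T} :=
  [set x | [exists s in S, d x s <= r]].
Definition ball1 (x : T) (r : R) : {set T} := ballS [set x] r.

(* xs = [x_1; ...; x_m] is a run of the greedy eta-net procedure: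
   each x_j lies in S_j = X \ B(N_{j-1}, eta) and maximizes |B(., eta/3)| on S_j,
   and S_{m+1} is empty. *)
Definition greedy_run (eta : R) (xs : seq T) : Prop :=
  (forall ys x zs, xs = ys ++ x :: zs ->
     x \notin ballS [set y in ys] eta /\
     (forall y, y \notin ballS [set y in ys] eta ->
        (#|ball1 y (eta / 3%:R)| <= #|ball1 x (eta / 3%:R)|)%N)) /\
  ballS [set y in xs] eta = [set: T].

(* N is an output of the greedy eta-net procedure (for some tie-breaking) *)
Definition greedy_net (eta : R) (N : {set T}) : Prop :=
  exists xs, greedy_run eta xs /\ N = [set y in xs].

Definition arc (U : nat -> {set T}) (k : nat) (u u' : T) : Prop :=
  [/\ u \in U k, u' \in U k.+1,
      d u u' <= 4%:R * tau ^- k &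
      forall w, w \in ball1 u' (6%:R * tau ^- k.+1) ->
        (#|ball1 w (tau ^- k / 3%:R)| <= #|ball1 u (tau ^- k / 3%:R)|)%N].

(* weight of an arc from level k to level k+1 *)
Definition omega (k : nat) : R := 10%:R * tau ^- k.

(* a directed path from the root (level 0) to level K: g i is the vertex
   (g i, i) at level i *)
Definition root_path (U : nat -> {set T}) (K : nat) (g : {ffun 'I_K.+1 -> T}) : Prop :=
  (forall i : 'I_K.+1, g i \in U i) /\
  (forall k, (k < K)%N -> arc U k (g (inord k)) (g (inord k.+1))).

(* dist_{hat D}(g1, g2): if j is the first level where the paths differ,
   the divergence vertex a is at level j-1 and both diverging arcs have
   weight omega (j-1). *)
Definition pdist (K : nat) (g1 g2 : {ffun 'I_K.+1 -> T}) : R :=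
  if g1 == g2 then 0 else
  let j := find (fun i : 'I_K.+1 => g1 i != g2 i) (enum 'I_K.+1) in
  Num.max (omega j.-1) (omega j.-1).

End Construction.

(** A root path moves by at most [4 tau^-k] from level [k] to level [k+1], so
    below level [j] it stays within [4 tau^-j (1 + 1/tau + ...) = 48/11 tau^-j]
    of its level-[j] vertex. If two paths share their level-[j] vertex and
    diverge there, their endpoints are thus at distance at most
    [96/11 tau^-j < 10 tau^-j = omega j]. If they already differ at the root,
    the diameter bound [1 <= omega 0] suffices. *)
From HB Require Import structures.
From mathcomp Require Import all_boot all_order all_algebra.
From mathcomp Require Import reals exp.
From mathcomp Require Import lra.
Set Implicit Arguments. Unset Strict Implicit. Unset Printing Implicit Defensive.
Import Order.TTheory GRing.Theory Num.Theory.
Local Open Scope ring_scope.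

Section RootPaths.
Variables (R : realType) (T : finType) (d : T -> T -> R).
Hypothesis d_metric : is_metric d.

Lemma tau_invXS n : tau R ^- n.+1 = tau R ^- n / 12%:R.
Proof. by rewrite exprSr invfM. Qed.

Lemma tau_invX_ge0 n : 0 <= tau R ^- n.
Proof. by rewrite invr_ge0 exprn_ge0 // ler0n. Qed.

Lemma dist_le_diam x y : d x y <= diam d.
Proof. exact: (le_bigmax _ (fun p : T * T => d p.1 p.2) (x, y)). Qed.

Lemma root_path_dist U K (g : {ffun 'I_K.+1 -> T}) m n :
  root_path d U g -> (m <= n <= K)%N ->
  d (g (inord m)) (g (inord n)) <= 48%:R / 11%:R * (tau R ^- m - tau R ^- n).
Proof.
have [d0 _ d_tri] := d_metric; move=> [_ g_arc] /andP[]; elim: n => [|n IHn].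
  by rewrite leqn0 => /eqP-> _; rewrite subrr mulr0 (proj2 (d0 _ _)).
rewrite leq_eqVlt => /orP[/eqP-> _|lt_mn lt_nK].
  by rewrite subrr mulr0 (proj2 (d0 _ _)).
have [_ _ step _] := g_arc n lt_nK.
have := d_tri (g (inord m)) (g (inord n)) (g (inord n.+1)).
have := IHn lt_mn (ltnW lt_nK); have := tau_invX_ge0 n.
rewrite tau_invXS /tau; lra.
Qed.

Lemma root_paths_dist_le_omega U K (g1 g2 : {ffun 'I_K.+1 -> T}) j :
  root_path d U g1 -> root_path d U g2 -> (j <= K)%N ->
  g1 (inord j) = g2 (inord j) ->
  d (g1 ord_max) (g2 ord_max) <= omega R j.
Proof.
have [_ d_sym d_tri] := d_metric; move=> p1 p2 le_jK g12j.
have maxE : ord_max = inord K :> 'I_K.+1 by apply: val_inj; rewrite /= inordK.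
have le_jKK : (j <= K <= K)%N by rewrite le_jK leqnn.
have b1 := root_path_dist p1 le_jKK; have b2 := root_path_dist p2 le_jKK.
rewrite -maxE -g12j in b1 b2.
have := d_tri (g1 ord_max) (g1 (inord j)) (g2 ord_max).
have := d_sym (g1 ord_max) (g1 (inord j)).
have := tau_invX_ge0 j; have := tau_invX_ge0 K.
rewrite /omega /tau; lra.
Qed.

Lemma pdist_divergence K (g1 g2 : {ffun 'I_K.+1 -> T}) : g1 != g2 ->
  exists j, [/\ (j <= K)%N, pdist R g1 g2 = omega R j &
                j = 0%N \/ g1 (inord j) = g2 (inord j)].
Proof.
move=> g12; rewrite /pdist (negbTE g12) maxxx.
have : has (fun i => g1 i != g2 i) (enum 'I_K.+1).
  have [i g12i] : exists i, g1 i != g2 i.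
    apply/existsP; rewrite -negb_forall; apply: contra g12 => /forallP g12.
    by apply/eqP/ffunP => i; apply/eqP.
  by apply/hasP; exists i; rewrite ?mem_enum.
rewrite has_find size_enum_ord.
case E: find => [|j] lt_jK; first by exists 0%N; split=> //; left.
exists j; split; [exact: ltnW | by [] | right].
have lt_jK1 : (j < K.+1)%N by exact: ltnW.
have := @before_find _ ord0 (fun i => g1 i != g2 i) (enum 'I_K.+1) j.
rewrite E ltnSn => /(_ isT).
have -> : nth ord0 (enum 'I_K.+1) j = inord j.
  by apply: val_inj; rewrite /= nth_enum_ord ?inordK.
by move/negbFE/eqP.
Qed.

End RootPaths.

Theorem lemma3p7 (R : realType) (T : finType) (d : T -> T -> R)
  (U : nat -> {set T}) :
  is_metric d -> (1 < #|T|)%N -> diam d = 1 ->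
  (forall k, (k <= Kc d)%N -> greedy_net d (tau R ^- k) (U k)) ->
  forall g1 g2 : {ffun 'I_(Kc d).+1 -> T},
    root_path d U g1 -> root_path d U g2 ->
    d (g1 ord_max) (g2 ord_max) <= pdist R g1 g2.
Proof.
move=> d_metric _ diam1 _; move: (Kc d) => K g1 g2 p1 p2.
have [d0 _ _] := d_metric.
have [<-|g12] := eqVneq g1 g2.
  by rewrite /pdist eqxx (proj2 (d0 _ _)).
have [j [le_jK -> [->|g12j]]] := pdist_divergence R g12.
- apply: le_trans (dist_le_diam d _ _) _.
  by rewrite diam1 /omega expr0 invr1 mulr1 ler1n.
- exact (root_paths_dist_le_omega d_metric p1 p2 le_jK g12j).
Qed.
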